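(* Let $N$ be a nonnegative integer and let $f,a_1,a_2,p,d_1,d_2\in\mathbb{C}$ be such that every hypergeometric series below is well defined (no lower parameter is a nonpositive integer) and the denominator $p(f-p-1)-a_1a_2$ is nonzero. Put $$h=\frac{p(a_1+a_2-f+1)(p-f+1)}{p(f-p-1)-a_1a_2}.$$ Then $$ {}_{9}F_{8}\left[\begin{matrix} f-1,\ \frac{f+1}{2},\ a_1,\ a_2,\ f-p,\ p+1,\ d_1,\ d_2,\ -N\\ \frac{f-1}{2},\ f-a_1,\ f-a_2,\ p,\ f-p-1,\ f-d_1,\ f-d_2,\ f+N\end{matrix};1\right]$$ $$=\frac{(f)_N\,(f-d_1-d_2)_N}{(f-d_1)_N\,(f-d_2)_N}\ {}_{5}F_{4}\left[\begin{matrix} d_1,\ d_2,\ f-a_1-a_2-1,\ h+1,\ -N\\ f-a_1,\ f-a_2,\ 1+d_1+d_2-f-N,\ h\end{matrix};1\right].$$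
   Context: $(x)_n$ denotes the Pochhammer symbol: $(x)_0=1$, $(x)_n=x(x+1)\cdots(x+n-1)$ for $n\ge1$. The generalized hypergeometric function is $${}_{r+1}F_{r}\left[\begin{matrix} a_1,\dots,a_{r+1}\\ b_1,\dots,b_r\end{matrix};z\right]=\sum_{n=0}^{\infty}\frac{(a_1)_n\cdots(a_{r+1})_n}{(b_1)_n\cdots(b_r)_n\,n!}z^n ,$$ where no $b_i$ is a nonpositive integer; when one upper parameter equals $-N$ with $N$ a nonnegative integer the series terminates. *)

From mathcomp Require Import all_boot all_algebra.
From mathcomp Require Import reals complex.
Set Implicit Arguments. Unset Strict Implicit. Unset Printing Implicit Defensive.
Import GRing.Theory Num.Theory.
Local Open Scope ring_scope.

Definition poch {F : fieldType} (x : F) (n : nat) : F :=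
  \prod_(i < n) (x + i%:R).

Definition hyp_term {F : fieldType} (a b : seq F) (z : F) (n : nat) : F :=
  (\prod_(x <- a) poch x n) / ((\prod_(y <- b) poch y n) * (n`!)%:R) * z ^+ n.

(* Terminating hypergeometric series: when -N is one of the upper
   parameters, every term of index n > N vanishes ((-N)_n = 0), so the
   series is the finite sum of its terms of index 0..N. *)
Definition hypF_term {F : fieldType} (N : nat) (a b : seq F) (z : F) : F :=
  \sum_(n < N.+1) hyp_term a b z n.

Definition lower_ok {F : fieldType} (b : seq F) : Prop :=
  forall y, y \in b -> forall k : nat, y <> - (k%:R).

(* Write a = f - 1.  The extra pairs of the 9F8 contribute the factor
   (p + n)(a - p + n) / (p (a - p)) = 1 + n (n + a) / (p (a - p)), so the 9F8 is a terminating
   very-well-poised 7F6 plus a multiple of the 7F6 with parameters a + 2, b + 1, c + 1, d + 1,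
   e + 1 and N - 1.  Whipple's transformation turns both into balanced 4F3's, and the relation
   (s + 1)_n = (s)_n (s + n) / s between the 4F3's with first numerator 1 + a - b - c and
   a - b - c recombines them into the 5F4 with the extra pair h + 1, h.
   Whipple's transformation comes from expanding each 4F3 term by Dougall's 5F4 summation,
   interchanging the double sum and summing the inner series by Pfaff-Saalschutz; both
   summations are proved by creative telescoping.  The interchange needs nonvanishing conditions
   beyond those of the statement, but they fail only at finitely many values of a, and both
   sides are rational functions of a, so the identity extends to all admissible a. *)

From mathcomp Require Import all_boot all_algebra.
From mathcomp Require Import reals complex.
From mathcomp Require Import ring zify.
Import GRing.Theory Num.Theory.
Local Open Scope ring_scope.

Section Pochhammer.
Context {F : fieldType}.
Implicit Types x y : F.

Lemma poch0 x : poch x 0 = 1.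
Proof. by rewrite /poch big_ord0. Qed.

Lemma pochS x n : poch x n.+1 = poch x n * (x + n%:R).
Proof. by rewrite /poch big_ord_recr. Qed.

Lemma poch1 x : poch x 1 = x.
Proof. by rewrite pochS poch0 mul1r addr0. Qed.

Lemma pochSl {x y} : x + 1 = y -> forall n, poch x n.+1 = x * poch y n.
Proof.
move=> <- n; rewrite /poch big_ord_recl addr0; congr (_ * _).
by apply: eq_bigr => i _; rewrite lift0 /= -natr1; ring.
Qed.

Lemma poch_add x m n : poch x (m + n) = poch x m * poch (x + m%:R) n.
Proof.
rewrite /poch big_split_ord /=; congr (_ * _).
by apply: eq_bigr => i _; rewrite natrD addrA.
Qed.

Lemma poch_reflection x k : poch x k = (-1) ^+ k * poch (- x - k%:R + 1) k.
Proof.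
elim: k => [|k IH]; first by rewrite !poch0 expr0 mul1r.
rewrite pochS IH (@pochSl _ (- x - k%:R + 1)); last by rewrite -natr1; ring.
by rewrite exprS -natr1; ring.
Qed.

Lemma poch_negn (n k : nat) : (n < k)%N -> poch (- n%:R : F) k = 0.
Proof. by move=> lt_nk; rewrite /poch (bigD1 (Ordinal lt_nk)) //= addNr mul0r. Qed.

Lemma poch_succ x n : x != 0 -> poch (x + 1) n = poch x n * (x + n%:R) / x.
Proof.
by move=> x0; apply: (canRL (mulfK x0)); rewrite mulrC -(pochSl (erefl _)) pochS.
Qed.

Lemma poch_pred x n : x + n%:R != 0 -> poch x n = x * poch (x + 1) n / (x + n%:R).
Proof. by move=> xn0; apply: (canRL (mulfK xn0)); rewrite -pochS (pochSl (erefl _)). Qed.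

Lemma poch_neq0 x n : (forall i, (i < n)%N -> x + i%:R != 0) -> poch x n != 0.
Proof. by move=> h; apply/prodf_neq0 => i _; apply: h. Qed.

Lemma poch_neq0_sub {x y m k n} :
  (m + k <= n)%N -> x + m%:R = y -> poch x n != 0 -> poch y k != 0.
Proof.
move=> le_mkn <-; rewrite -(subnKC le_mkn) poch_add poch_add.
by rewrite !mulf_eq0 !negb_or => /andP[/andP[_ ->]].
Qed.

Lemma poch_neq0_le {x k n} : (k <= n)%N -> poch x n != 0 -> poch x k != 0.
Proof. by move=> le_kn; apply: (@poch_neq0_sub x x 0%N) => //; rewrite addr0. Qed.

Lemma poch_neq0_factor {x y i n} : (i < n)%N -> x + i%:R = y -> poch x n != 0 -> y != 0.
Proof. by move=> lt_in Exy /(poch_neq0_sub (k := 1) _ Exy); rewrite poch1 addn1; apply. Qed.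

Lemma hypF_term1 N (a b : seq F) :
  hypF_term N a b 1
  = \sum_(n < N.+1) (\prod_(x <- a) poch x n) / ((\prod_(y <- b) poch y n) * (n`!)%:R).
Proof. by apply: eq_bigr => n _; rewrite /hyp_term expr1n mulr1. Qed.

End Pochhammer.

Section CharZero.
Context {F : numFieldType}.
Implicit Types x y : F.

Lemma natr_fact_neq0 n : (n`!)%:R != 0 :> F.
Proof. by rewrite pnatr_eq0 -lt0n fact_gt0. Qed.

Lemma natr_factS n : ((n.+1)`!)%:R = (n`!)%:R * (n.+1)%:R :> F.
Proof. by rewrite factS natrM mulrC. Qed.

Lemma natr_fact_poch n : (n`!)%:R = poch (1 : F) n.
Proof. by elim: n => [|n IH]; rewrite ?poch0 // natr_factS IH pochS -natr1 addrC. Qed.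

Lemma poch_natS_neq0 (i k : nat) : poch (1 + i%:R : F) k != 0.
Proof. by apply: poch_neq0 => m _; rewrite nat1r -natrD pnatr_eq0 addSn. Qed.

Definition not_nonpos_int x := forall k : nat, x + k%:R != 0.

Lemma not_nonpos_int_neq0 {x} : not_nonpos_int x -> x != 0.
Proof. by move=> /(_ 0%N); rewrite addr0. Qed.

Lemma not_nonpos_int_poch {x n} : not_nonpos_int x -> poch x n != 0.
Proof. by move=> h; apply: poch_neq0 => i _. Qed.

Lemma not_nonpos_int_succ {x y} : not_nonpos_int x -> x + 1 = y -> not_nonpos_int y.
Proof. by move=> h <- i; rewrite -addrA nat1r; apply: h. Qed.

End CharZero.

Section Summation.
Context {F : numFieldType}.

Lemma creative_telescoping (u v g : nat -> F) (rho : F) n :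
  (forall k, (k <= n)%N -> u k - rho * v k = g k.+1 - g k) ->
  g 0%N = 0 -> g n.+1 = 0 -> v n = 0 ->
  \sum_(k < n.+1) u k = rho * \sum_(k < n) v k.
Proof.
move=> cert g0 gn vn; apply/eqP; rewrite -subr_eq0.
have -> : rho * \sum_(k < n) v k = \sum_(k < n.+1) rho * v k.
  by rewrite big_ord_recr /= vn mulr0 addr0 mulr_sumr.
rewrite -sumrB -(big_mkord xpredT (fun k => u k - rho * v k)).
by rewrite (telescope_sumr_eq g) // ?gn ?g0 ?subr0 // => k /andP[_]; apply: cert.
Qed.

Definition saal_term (A B C : F) (n k : nat) : F :=
  poch A k * poch B k * poch (- n%:R) k /
  (poch C k * poch (1 + A + B - C - n%:R) k * (k`!)%:R).

Definition saal_cert (A B C : F) (n j : nat) : F :=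
  - (poch A j.+1 * poch B j.+1 * poch (- n%:R) j) /
  ((C + n%:R) * (C - A - B + n%:R) * poch C j * poch (1 + A + B - C - n%:R) j * (j`!)%:R).

Lemma saal_cert_step (A B C : F) n j :
  C + j%:R != 0 -> C + n%:R != 0 -> C - A - B + n%:R != 0 ->
  poch C j != 0 -> poch (1 + A + B - C - n%:R) j != 0 ->
  1 + A + B - C - n%:R + j%:R != 0 -> 1 + A + B - C - (n.+1)%:R != 0 ->
  saal_term A B C n.+1 j.+1 - (C - A + n%:R) * (C - B + n%:R) /
    ((C + n%:R) * (C - A - B + n%:R)) * saal_term A B C n j.+1
  = saal_cert A B C n j.+1 - saal_cert A B C n j.
Proof.
move=> *; rewrite /saal_term /saal_cert.
rewrite (@pochSl _ (- (n.+1)%:R) (- n%:R)); last by rewrite -natr1; ring.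
rewrite (@pochSl _ (1 + A + B - C - (n.+1)%:R) (1 + A + B - C - n%:R)); last first.
  by rewrite -natr1; ring.
rewrite !(pochS _ j.+1) !(pochS _ j) !natr_factS.
have := natr_fact_neq0 (F := F) j; have : (j.+1)%:R != 0 :> F by rewrite pnatr_eq0.
by move=> *; field; rewrite !nat1r; repeat (apply/andP; split).
Qed.

Theorem saalschutz (A B C : F) n :
  poch C n.+1 != 0 -> poch (C - A - B) n.+1 != 0 ->
  poch (1 + A + B - C - n%:R) n.+1 != 0 ->
  \sum_(k < n.+1) saal_term A B C n k
  = poch (C - A) n * poch (C - B) n / (poch C n * poch (C - A - B) n).
Proof.
elim: n => [|n IH] hC hCAB hD.
  by rewrite big_ord1 /saal_term !poch0 /= !mulr1 !divr1.
have hD' : poch (1 + A + B - C - n%:R) n.+1 != 0.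
  by apply: (poch_neq0_sub (m := 1) _ _ hD) => //; rewrite -natr1; ring.
have hCn := poch_neq0_factor (leqnSn n.+1) (erefl _) hC.
have hCABn := poch_neq0_factor (leqnSn n.+1) (erefl _) hCAB.
rewrite (@creative_telescoping _ (saal_term A B C n)
  (fun k => if k is j.+1 then saal_cert A B C n j else 0)
  ((C - A + n%:R) * (C - B + n%:R) / ((C + n%:R) * (C - A - B + n%:R)))); first last.
- by rewrite /saal_term poch_negn // mulr0 mul0r.
- by rewrite /saal_cert poch_negn // !(mulr0, oppr0, mul0r).
- by [].
- move=> [|j] le_jn /=.
    rewrite /saal_term /saal_cert !poch0 !poch1 /= subr0 !mulr1 !divr1.
    by field; rewrite hCn hCABn.
  apply: saal_cert_step => //.
  + by apply: (poch_neq0_factor _ (erefl _) hC); lia.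
  + by apply: (poch_neq0_le _ hC); lia.
  + by apply: (poch_neq0_le _ hD'); lia.
  + by apply: (poch_neq0_factor _ (erefl _) hD'); lia.
  + by apply: (poch_neq0_factor (ltn0Sn _) _ hD); rewrite addr0.
have hC1 := poch_neq0_le (leqnSn _) hC; have hCAB1 := poch_neq0_le (leqnSn _) hCAB.
have := poch_neq0_le (leqnSn _) hC1; have := poch_neq0_le (leqnSn _) hCAB1.
by rewrite IH // !pochS => *; field; repeat (apply/andP; split).
Qed.

Definition dougall_term (a b c : F) (n k : nat) : F :=
  (a + 2%:R * k%:R) / a * poch a k * poch b k * poch c k * poch (- n%:R) k /
  (poch (1 + a - b) k * poch (1 + a - c) k * poch (1 + a + n%:R) k * (k`!)%:R).

Definition dougall_cert (a b c : F) (n j : nat) : F :=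
  (1 + a + n%:R) / ((1 + a - b + n%:R) * (1 + a - c + n%:R) * a) *
  (poch a j.+1 * poch b j.+1 * poch c j.+1 * poch (- n%:R) j) /
  (poch (1 + a - b) j * poch (1 + a - c) j * poch (1 + a + n%:R) j.+1 * (j`!)%:R).

Lemma dougall_cert_step (a b c : F) n j :
  a != 0 -> 1 + a + n%:R != 0 -> 1 + a - b + n%:R != 0 -> 1 + a - c + n%:R != 0 ->
  1 + a - b + j%:R != 0 -> 1 + a - c + j%:R != 0 ->
  poch (1 + a - b) j != 0 -> poch (1 + a - c) j != 0 ->
  poch (1 + a + (n.+1)%:R) j != 0 -> 1 + a + (n.+1)%:R + j%:R != 0 ->
  dougall_term a b c n.+1 j.+1 - (1 + a + n%:R) * (1 + a - b - c + n%:R) /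
    ((1 + a - b + n%:R) * (1 + a - c + n%:R)) * dougall_term a b c n j.+1
  = dougall_cert a b c n j.+1 - dougall_cert a b c n j.
Proof.
move=> *; rewrite /dougall_term /dougall_cert.
rewrite (@pochSl _ (- (n.+1)%:R) (- n%:R)); last by rewrite -natr1; ring.
have E : 1 + a + n%:R + 1 = 1 + a + (n.+1)%:R by rewrite -natr1; ring.
rewrite !(pochSl E) !(pochS _ j.+1) !(pochS _ j) !natr_factS.
have := natr_fact_neq0 (F := F) j; have : (j.+1)%:R != 0 :> F by rewrite pnatr_eq0.
by move=> *; field; rewrite !nat1r; repeat (apply/andP; split).
Qed.

Theorem dougall (a b c : F) n :
  a != 0 -> poch (1 + a - b) n.+1 != 0 -> poch (1 + a - c) n.+1 != 0 ->
  poch (1 + a) (n.*2).+1 != 0 ->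
  \sum_(k < n.+1) dougall_term a b c n k
  = poch (1 + a) n * poch (1 + a - b - c) n / (poch (1 + a - b) n * poch (1 + a - c) n).
Proof.
move=> a0; elim: n => [|n IH] hb hc hA.
  by rewrite big_ord1 /dougall_term !poch0 /= !mulr1 !divr1 !mulr0 addr0 divff.
have hbn := poch_neq0_factor (leqnSn n.+1) (erefl _) hb.
have hcn := poch_neq0_factor (leqnSn n.+1) (erefl _) hc.
have hAn : 1 + a + n%:R != 0 by apply: (poch_neq0_factor _ (erefl _) hA); rewrite doubleS; lia.
have hAshift j : (j <= n)%N -> poch (1 + a + (n.+1)%:R) j.+1 != 0.
  by move=> le_jn; apply: (poch_neq0_sub _ (erefl _) hA); rewrite doubleS; lia.
rewrite (@creative_telescoping _ (dougall_term a b c n)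
  (fun k => if k is j.+1 then dougall_cert a b c n j else 0)
  ((1 + a + n%:R) * (1 + a - b - c + n%:R) / ((1 + a - b + n%:R) * (1 + a - c + n%:R))));
  first last.
- by rewrite /dougall_term poch_negn // mulr0 mul0r.
- by rewrite /dougall_cert poch_negn // !(mulr0, mul0r).
- by [].
- move=> [|j] le_jn /=.
    rewrite /dougall_term /dougall_cert !poch0 !poch1 /= subr0 !mulr1 !divr1.
    by rewrite !mulr0 addr0 divff // mul1r; field; rewrite hAn hbn hcn a0.
  apply: dougall_cert_step => //.
  + by apply: (poch_neq0_factor _ (erefl _) hb); lia.
  + by apply: (poch_neq0_factor _ (erefl _) hc); lia.
  + by apply: (poch_neq0_le _ hb); lia.
  + by apply: (poch_neq0_le _ hc); lia.
  + by apply: (poch_neq0_le _ (hAshift _ le_jn)).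
  + by apply: (poch_neq0_factor _ (erefl _) (hAshift _ le_jn)).
have hb1 := poch_neq0_le (leqnSn _) hb; have hc1 := poch_neq0_le (leqnSn _) hc.
have hA' : poch (1 + a) (n.*2).+1 != 0 by apply: (poch_neq0_le _ hA); rewrite doubleS; lia.
have := poch_neq0_le (leqnSn _) hb1; have := poch_neq0_le (leqnSn _) hc1.
by rewrite IH // !pochS => *; field; repeat (apply/andP; split).
Qed.

End Summation.

Lemma sum_triangle_swap {V : nmodType} (G : nat -> nat -> V) N :
  \sum_(j < N.+1) \sum_(k < j.+1) G j k
  = \sum_(k < N.+1) \sum_(i < (N - k).+1) G (k + i)%N k.
Proof.
elim: N => [|N IH]; first by rewrite !big_ord1.
rewrite big_ord_recr /= IH [RHS]big_ord_recr /= subnn big_ord1 addn0.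
rewrite [X in _ = X + _](eq_bigr (fun k : 'I_N.+1 =>
   \sum_(i < (N - k).+1) G (k + i)%N k + G N.+1 k)); last first.
  move=> k _; rewrite subSn; last by rewrite -ltnS.
  rewrite big_ord_recr /=; congr (_ + _); congr (G _ _); have := ltn_ord k; lia.
rewrite big_split /= [X in _ = _ + X + _]big_ord_recr /=.
by rewrite -addrA; congr (_ + _); rewrite big_ord_recr /= big_ord_recr.
Qed.

Section Whipple.
Context {F : numFieldType}.
Implicit Types a b c d e s : F.

Definition vwp_term a b c d e (N k : nat) : F :=
  (a + 2%:R * k%:R) / a * poch a k * poch b k * poch c k * poch d k * poch e k *
  poch (- N%:R) k /
  (poch (1 + a - b) k * poch (1 + a - c) k * poch (1 + a - d) k * poch (1 + a - e) k *
   poch (1 + a + N%:R) k * (k`!)%:R).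

Definition bal_term s a b c d e (N j : nat) : F :=
  poch s j * poch d j * poch e j * poch (- N%:R) j /
  (poch (1 + a - b) j * poch (1 + a - c) j * poch (d + e - a - N%:R) j * (j`!)%:R).

Definition whipple_factor a d e (N : nat) : F :=
  poch (1 + a) N * poch (1 + a - d - e) N / (poch (1 + a - d) N * poch (1 + a - e) N).

Definition outer_weight a d e (N j : nat) : F :=
  poch d j * poch e j * poch (- N%:R) j /
  (poch (d + e - a - N%:R) j * (j`!)%:R * poch (1 + a) j).

Definition inner_weight a b c d e (N k : nat) : F :=
  (a + 2%:R * k%:R) / a * poch a k * poch b k * poch c k * poch d k * poch e k *
  poch (- N%:R) k * (-1) ^+ k /
  (poch (1 + a - b) k * poch (1 + a - c) k * poch (d + e - a - N%:R) k *
   poch (1 + a) (k + k) * (k`!)%:R).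

Lemma bal_term_dougall a b c d e N j :
  poch (1 + a) j != 0 -> poch (1 + a - b) j != 0 -> poch (1 + a - c) j != 0 ->
  poch (d + e - a - N%:R) j != 0 ->
  bal_term (1 + a - b - c) a b c d e N j
  = outer_weight a d e N j *
    (poch (1 + a) j * poch (1 + a - b - c) j / (poch (1 + a - b) j * poch (1 + a - c) j)).
Proof.
have := natr_fact_neq0 (F := F) j.
by move=> *; rewrite /bal_term /outer_weight; field; repeat (apply/andP; split).
Qed.

Lemma poch_shift_ratio (x : F) (k i : nat) :
  poch x (k + i) != 0 ->
  poch (x + (k + i)%:R) k = poch x (k + k) * poch (x + 2%:R * k%:R) i / poch x (k + i).
Proof.
move=> h; apply: (canRL (mulfK h)).
rewrite mulrC -poch_add -(addnC k) addnA poch_add; congr (_ * _).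
by congr poch; rewrite natrD; ring.
Qed.

Lemma outer_dougall_saal a b c d e (N k i : nat) :
  (k + i <= N)%N -> a != 0 ->
  poch (1 + a - b) k != 0 -> poch (1 + a - c) k != 0 ->
  poch (d + e - a - N%:R) k != 0 -> poch (d + e - a - N%:R + k%:R) i != 0 ->
  poch (1 + a) (k + i) != 0 -> poch (1 + a) (k + k) != 0 ->
  poch (1 + a + 2%:R * k%:R) i != 0 ->
  outer_weight a d e N (k + i) * dougall_term a b c (k + i) k
  = inner_weight a b c d e N k * saal_term (d + k%:R) (e + k%:R) (1 + a + 2%:R * k%:R) (N - k) i.
Proof.
move=> le_kiN *.
have Efact : ((k + i)`!)%:R = (i`!)%:R * poch (1 + i%:R : F) k.
  by rewrite addnC !natr_fact_poch poch_add.
have Eneg : poch (- (k + i)%:R : F) k = (-1) ^+ k * poch (1 + i%:R) k.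
  by rewrite poch_reflection; congr (_ * poch _ _); rewrite natrD; ring.
rewrite /outer_weight /dougall_term /inner_weight /saal_term poch_shift_ratio // Efact Eneg.
rewrite (poch_add d) (poch_add e) (poch_add (- N%:R)) (poch_add (d + e - a - N%:R)).
rewrite natrB; last by lia.
have -> : 1 + (d + k%:R) + (e + k%:R) - (1 + a + 2%:R * k%:R) - (N%:R - k%:R)
  = d + e - a - N%:R + k%:R by ring.
have -> : - (N%:R - k%:R) = - N%:R + k%:R :> F by ring.
have := natr_fact_neq0 (F := F) i; have := natr_fact_neq0 (F := F) k.
have := poch_natS_neq0 (F := F) i k.
by move=> *; field; repeat (apply/andP; split).
Qed.

Lemma inner_weight_saal a b c d e (k m : nat) :
  a != 0 ->
  poch (1 + a - b) k != 0 -> poch (1 + a - c) k != 0 ->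
  poch (1 + a - d) k != 0 -> poch (1 + a - e) k != 0 ->
  poch (1 + a - d + k%:R) m != 0 -> poch (1 + a - e + k%:R) m != 0 ->
  poch (1 + a) (k + m) != 0 -> poch (1 + a) (k + k) != 0 ->
  poch (1 + a + 2%:R * k%:R) m != 0 -> poch (1 + a - d - e) m != 0 ->
  poch (1 + a - d - e + m%:R) k != 0 ->
  whipple_factor a d e (k + m) * (inner_weight a b c d e (k + m) k *
  (poch (1 + a + 2%:R * k%:R - (d + k%:R)) m * poch (1 + a + 2%:R * k%:R - (e + k%:R)) m /
   (poch (1 + a + 2%:R * k%:R) m *
    poch (1 + a + 2%:R * k%:R - (d + k%:R) - (e + k%:R)) m)))
  = vwp_term a b c d e (k + m) k.
Proof.
move=> *.
have Erefl : poch (d + e - a - (k + m)%:R) k = (-1) ^+ k * poch (1 + a - d - e + m%:R) k.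
  by rewrite poch_reflection; congr (_ * poch _ _); rewrite natrD; ring.
have Eprod : poch (1 + a - d - e) (k + m) = poch (1 + a - d - e) m * poch (1 + a - d - e + m%:R) k.
  by rewrite addnC poch_add.
rewrite /whipple_factor /inner_weight /vwp_term poch_shift_ratio // Erefl Eprod.
rewrite (poch_add (1 + a - d) k m) (poch_add (1 + a - e) k m).
have -> : 1 + a + 2%:R * k%:R - (d + k%:R) = 1 + a - d + k%:R by ring.
have -> : 1 + a + 2%:R * k%:R - (e + k%:R) = 1 + a - e + k%:R by ring.
have -> : 1 + a - d + k%:R - (e + k%:R) = 1 + a - d - e by ring.
have := natr_fact_neq0 (F := F) k.
have : (-1) ^+ k != 0 :> F by rewrite expf_neq0 // oppr_eq0 oner_eq0.
by move=> *; field; repeat (apply/andP; split).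
Qed.

Section WhippleGeneric.
Variables (a b c d e : F) (N : nat).
Hypotheses (a0 : a != 0)
  (hb : poch (1 + a - b) N.+1 != 0) (hc : poch (1 + a - c) N.+1 != 0)
  (hd : poch (1 + a - d) N.+1 != 0) (he : poch (1 + a - e) N.+1 != 0)
  (hA : poch (1 + a) (N.*2).+1 != 0) (hde : poch (1 + a - d - e) N.+1 != 0)
  (hD : poch (d + e - a - N%:R) N.+1 != 0).

Lemma sum_bal_dougall :
  \sum_(j < N.+1) bal_term (1 + a - b - c) a b c d e N j
  = \sum_(j < N.+1) \sum_(k < j.+1) outer_weight a d e N j * dougall_term a b c j k.
Proof.
apply: eq_bigr => j _; have := ltn_ord j => lt_jN.
rewrite bal_term_dougall -?mulr_sumr -?dougall //.
- exact: poch_neq0_le hb.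
- exact: poch_neq0_le hc.
- by apply: (poch_neq0_le _ hA); rewrite ltnS leq_double.
- by apply: (poch_neq0_le _ hA); lia.
- by apply: (poch_neq0_le _ hb); lia.
- by apply: (poch_neq0_le _ hc); lia.
- by apply: (poch_neq0_le _ hD); lia.
Qed.

Lemma sum_outer_dougall_column k : (k <= N)%N ->
  whipple_factor a d e N *
    \sum_(i < (N - k).+1) outer_weight a d e N (k + i) * dougall_term a b c (k + i) k
  = vwp_term a b c d e N k.
Proof.
move=> le_kN.
under eq_bigr => i _.
  have := ltn_ord i => lt_iNk.
  rewrite outer_dougall_saal; last 9 first.
  - by lia.
  - exact: a0.
  - by apply: (poch_neq0_le _ hb); lia.
  - by apply: (poch_neq0_le _ hc); lia.
  - by apply: (poch_neq0_le _ hD); lia.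
  - by apply: (poch_neq0_sub _ (erefl _) hD); lia.
  - by apply: (poch_neq0_le _ hA); lia.
  - by apply: (poch_neq0_le _ hA); lia.
  - by apply: (poch_neq0_sub (m := k + k) _ _ hA); [lia | rewrite natrD; ring].
  over.
rewrite -mulr_sumr saalschutz; first last.
- by apply: (poch_neq0_sub (m := k) _ _ hD); [lia | rewrite natrB //; ring].
- by apply: (poch_neq0_sub (m := 0) _ _ hde); [lia | ring].
- by apply: (poch_neq0_sub (m := k + k) _ _ hA); [lia | rewrite natrD; ring].
have := @inner_weight_saal a b c d e k (N - k) a0; rewrite subnKC // => -> //.
- by apply: (poch_neq0_le _ hb); lia.
- by apply: (poch_neq0_le _ hc); lia.
- by apply: (poch_neq0_le _ hd); lia.
- by apply: (poch_neq0_le _ he); lia.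
- by apply: (poch_neq0_sub _ (erefl _) hd); lia.
- by apply: (poch_neq0_sub _ (erefl _) he); lia.
- by apply: (poch_neq0_le _ hA); lia.
- by apply: (poch_neq0_le _ hA); lia.
- by apply: (poch_neq0_sub (m := k + k) _ _ hA); [lia | rewrite natrD; ring].
- by apply: (poch_neq0_le _ hde); lia.
- by apply: (poch_neq0_sub _ (erefl _) hde); lia.
Qed.

Lemma whipple_generic :
  \sum_(k < N.+1) vwp_term a b c d e N k
  = whipple_factor a d e N * \sum_(j < N.+1) bal_term (1 + a - b - c) a b c d e N j.
Proof.
rewrite sum_bal_dougall.
rewrite (sum_triangle_swap (fun j k => outer_weight a d e N j * dougall_term a b c j k)).
by rewrite mulr_sumr; apply: eq_bigr => k _; rewrite sum_outer_dougall_column // -ltnS.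
Qed.

End WhippleGeneric.

End Whipple.

Section RationalFunctions.
Context {F : numFieldType}.
Implicit Types (x a : F) (g h : F -> F) (q r : {poly F}).

Lemma horner0_poly_eq0 r : (forall x, r.[x] = 0) -> r = 0.
Proof.
move=> r0; apply/eqP; apply: contraT => r_neq0.
set rs := [seq (i%:R : F) | i <- iota 0 (size r)].
have rs_uniq : uniq rs.
  by rewrite map_inj_uniq ?iota_uniq // => i j /eqP; rewrite eqr_nat => /eqP.
have rs_roots : all (root r) rs by apply/allP => y _; rewrite /root r0.
by have := max_poly_roots r_neq0 rs_roots rs_uniq; rewrite size_map size_iota ltnn.
Qed.

Definition rational_at a g :=
  exists p q : {poly F}, q.[a] != 0 /\ forall x, q.[x] != 0 -> g x = p.[x] / q.[x].

Lemma rational_at_const a (c : F) : rational_at a (fun=> c).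
Proof.
exists c%:P, 1; split; first by rewrite hornerC oner_eq0.
by move=> x _; rewrite !hornerC divr1.
Qed.

Lemma rational_at_id a : rational_at a id.
Proof.
exists 'X, 1; split; first by rewrite hornerC oner_eq0.
by move=> x _; rewrite hornerX hornerC divr1.
Qed.

Lemma rational_at_add {a g h} :
  rational_at a g -> rational_at a h -> rational_at a (fun x => g x + h x).
Proof.
move=> [p1 [q1 [q1a Eg]]] [p2 [q2 [q2a Eh]]].
exists (p1 * q2 + p2 * q1), (q1 * q2); split; first by rewrite hornerM mulf_neq0.
move=> x; rewrite hornerM mulf_eq0 negb_or => /andP[q1x q2x].
by rewrite Eg // Eh // hornerD !hornerM; field; rewrite q1x q2x.
Qed.

Lemma rational_at_mul {a g h} :
  rational_at a g -> rational_at a h -> rational_at a (fun x => g x * h x).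
Proof.
move=> [p1 [q1 [q1a Eg]]] [p2 [q2 [q2a Eh]]].
exists (p1 * p2), (q1 * q2); split; first by rewrite hornerM mulf_neq0.
move=> x; rewrite hornerM mulf_eq0 negb_or => /andP[q1x q2x].
by rewrite Eg // Eh // !hornerM; field; rewrite q1x q2x.
Qed.

Lemma rational_at_opp {a g} : rational_at a g -> rational_at a (fun x => - g x).
Proof.
move=> [p [q [qa Eg]]]; exists (- p), q; split => // x qx.
by rewrite Eg // hornerN mulNr.
Qed.

Lemma rational_at_inv {a g} : g a != 0 -> rational_at a g -> rational_at a (fun x => (g x)^-1).
Proof.
move=> ga [p [q [qa Eg]]].
have pa : p.[a] != 0 by move: ga; rewrite Eg //; apply: contra => /eqP ->; rewrite mul0r.
exists (q * q), (p * q); split; first by rewrite hornerM mulf_neq0.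
move=> x; rewrite hornerM mulf_eq0 negb_or => /andP[px qx].
by rewrite Eg // hornerM; field; rewrite px qx.
Qed.

Lemma rational_at_ext {a g h} : g =1 h -> rational_at a g -> rational_at a h.
Proof. by move=> Egh [p [q [qa Eg]]]; exists p, q; split => // x qx; rewrite -Egh Eg. Qed.

Lemma rational_at_sum {a} {G : nat -> F -> F} {n} :
  (forall i, rational_at a (G i)) -> rational_at a (fun x => \sum_(i < n) G i x).
Proof.
move=> RG; elim: n => [|n IH].
  by apply: (rational_at_ext _ (rational_at_const a 0)) => x; rewrite big_ord0.
by apply: (rational_at_ext _ (rational_at_add IH (RG n))) => x; rewrite big_ord_recr.
Qed.

Lemma rational_at_prod {a} {G : nat -> F -> F} {n} :
  (forall i, rational_at a (G i)) -> rational_at a (fun x => \prod_(i < n) G i x).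
Proof.
move=> RG; elim: n => [|n IH].
  by apply: (rational_at_ext _ (rational_at_const a 1)) => x; rewrite big_ord0.
by apply: (rational_at_ext _ (rational_at_mul IH (RG n))) => x; rewrite big_ord_recr.
Qed.

Lemma rational_at_poch {a g n} : rational_at a g -> rational_at a (fun x => poch (g x) n).
Proof.
move=> Rg; apply: (rational_at_prod (G := fun i x => g x + i%:R)) => i.
exact: rational_at_add Rg (rational_at_const _ _).
Qed.

Lemma rational_at_eq a g h (B : {poly F}) :
  rational_at a g -> rational_at a h -> B != 0 ->
  (forall x, B.[x] != 0 -> g x = h x) -> g a = h a.
Proof.
move=> Rg Rh B_neq0 Egh.
have [p [q [qa Ediff]]] := rational_at_add Rg (rational_at_opp Rh).
have pqB0 : p * q * B = 0.
  apply: horner0_poly_eq0 => x; rewrite !hornerM.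
  have [->|Bx] := eqVneq B.[x] 0; first by rewrite mulr0.
  have [->|qx] := eqVneq q.[x] 0; first by rewrite mulr0 mul0r.
  move: (Ediff x qx); rewrite Egh // subrr => /esym /eqP.
  by rewrite mulf_eq0 invr_eq0 (negbTE qx) orbF => /eqP ->; rewrite !mul0r.
have q_neq0 : q != 0 by apply: contraNneq qa => ->; rewrite horner0.
move/eqP: pqB0; rewrite !mulf_eq0 (negbTE B_neq0) (negbTE q_neq0) !orbF => /eqP p0.
by apply/eqP; rewrite -subr_eq0 Ediff // p0 horner0 mul0r.
Qed.

Definition poch_poly (q : {poly F}) n := \prod_(i < n) (q + (i%:R)%:P).

Lemma horner_poch_poly q n x : (poch_poly q n).[x] = poch q.[x] n.
Proof. by rewrite /poch_poly horner_prod; apply: eq_bigr => i _; rewrite hornerD hornerC. Qed.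

Lemma poch_poly_neq0 q n : size q = 2 -> poch_poly q n != 0.
Proof.
move=> size_q; apply/prodf_neq0 => i _; rewrite -size_poly_eq0 size_polyDl size_q //.
by apply: leq_ltn_trans (size_polyC_leq1 _) _.
Qed.

End RationalFunctions.

Ltac rationality :=
  repeat first [ apply: rational_at_inv | apply: rational_at_poch | apply: rational_at_mul
  | apply: rational_at_add | apply: rational_at_opp | apply: rational_at_id
  | apply: rational_at_const ].

Theorem whipple {F : numFieldType} (a b c d e : F) N :
  a != 0 -> not_nonpos_int (1 + a - b) -> not_nonpos_int (1 + a - c) ->
  not_nonpos_int (1 + a - d) -> not_nonpos_int (1 + a - e) ->
  not_nonpos_int (1 + a + N%:R) -> not_nonpos_int (d + e - a - N%:R) ->
  \sum_(k < N.+1) vwp_term a b c d e N k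
  = whipple_factor a d e N * \sum_(j < N.+1) bal_term (1 + a - b - c) a b c d e N j.
Proof.
move=> a0 hb hc hd he hN hD.
(* B vanishes wherever one of the extra hypotheses of whipple_generic fails. *)
pose B := 'X * poch_poly ('X + (1 - b)%:P) N.+1 * poch_poly ('X + (1 - c)%:P) N.+1 *
  poch_poly ('X + (1 - d)%:P) N.+1 * poch_poly ('X + (1 - e)%:P) N.+1 *
  poch_poly ('X + 1%:P) (N.*2).+1 * poch_poly ('X + (1 - d - e)%:P) N.+1 *
  poch_poly ((d + e - N%:R)%:P - 'X) N.+1.
apply: (@rational_at_eq _ a (fun x => \sum_(k < N.+1) vwp_term x b c d e N k)
  (fun x => whipple_factor x d e N * \sum_(j < N.+1) bal_term (1 + x - b - c) x b c d e N j) B).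
- apply: (rational_at_sum (G := fun k x => vwp_term x b c d e N k)) => k.
  by rewrite /vwp_term; rationality; rewrite /= ?mulf_neq0 ?not_nonpos_int_poch ?natr_fact_neq0.
- apply: rational_at_mul.
    by rewrite /whipple_factor; rationality; rewrite /= ?mulf_neq0 ?not_nonpos_int_poch.
  apply: (rational_at_sum (G := fun k x => bal_term (1 + x - b - c) x b c d e N k)) => k.
  by rewrite /bal_term; rationality; rewrite /= ?mulf_neq0 ?not_nonpos_int_poch ?natr_fact_neq0.
- rewrite !mulf_neq0 ?polyX_eq0 ?poch_poly_neq0 ?size_XaddC //.
  by rewrite -opprB size_opp size_XsubC.
move=> x; rewrite !hornerM !mulf_eq0 !negb_or hornerX.
move=> /andP[/andP[/andP[/andP[/andP[/andP[/andP[x0 hb'] hc'] hd'] he'] hA'] hde'] hD'].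
have pochE (q : {poly F}) y n : (poch_poly q n).[x] != 0 -> q.[x] = y -> poch y n != 0.
  by rewrite horner_poch_poly => ? <-.
apply: whipple_generic => //;
  [move: hb' | move: hc' | move: hd' | move: he' | move: hA' | move: hde' | move: hD'];
  by move/pochE; apply; rewrite !(hornerD, hornerN, hornerX, hornerC); ring.
Qed.

Section Contiguous.
Context {F : numFieldType}.
Implicit Types a b c d e p s : F.

Lemma sum_mul_affine (u : nat -> F) s n : s != 0 ->
  \sum_(k < n) u k * ((s + k%:R) / s) = \sum_(k < n) u k + s^-1 * \sum_(k < n) k%:R * u k.
Proof.
by move=> s0; rewrite mulr_sumr -big_split; apply: eq_bigr => k _ /=; field.
Qed.

Definition vwp_shift_factor a b c d e (M : nat) : F :=
  (a + 2%:R) * (a + 1) * b * c * d * e * (- (M.+1)%:R) /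
  ((1 + a - b) * (1 + a - c) * (1 + a - d) * (1 + a - e) * (1 + a + (M.+1)%:R)).

Definition bal_shift_factor a b c d e (M : nat) : F :=
  d * e * (- (M.+1)%:R) / ((1 + a - b) * (1 + a - c) * (d + e - a - (M.+1)%:R)).

Lemma vwp_term_shift a b c d e M m :
  a != 0 -> a + 2%:R != 0 ->
  1 + a - b != 0 -> 1 + a - c != 0 -> 1 + a - d != 0 -> 1 + a - e != 0 ->
  1 + a + (M.+1)%:R != 0 ->
  poch (1 + (a + 2%:R) - (b + 1)) m != 0 -> poch (1 + (a + 2%:R) - (c + 1)) m != 0 ->
  poch (1 + (a + 2%:R) - (d + 1)) m != 0 -> poch (1 + (a + 2%:R) - (e + 1)) m != 0 ->
  poch (1 + (a + 2%:R) + M%:R) m != 0 ->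
  (m.+1)%:R * ((m.+1)%:R + a) * vwp_term a b c d e M.+1 m.+1
  = vwp_shift_factor a b c d e M * vwp_term (a + 2%:R) (b + 1) (c + 1) (d + 1) (e + 1) M m.
Proof.
move=> a0 a2 hb hc hd he hN pb pc pd pe pN.
rewrite /vwp_term /vwp_shift_factor.
have E1 : 1 + a - b + 1 = 1 + (a + 2%:R) - (b + 1) by ring.
have E2 : 1 + a - c + 1 = 1 + (a + 2%:R) - (c + 1) by ring.
have E3 : 1 + a - d + 1 = 1 + (a + 2%:R) - (d + 1) by ring.
have E4 : 1 + a - e + 1 = 1 + (a + 2%:R) - (e + 1) by ring.
have E5 : 1 + a + (M.+1)%:R + 1 = 1 + (a + 2%:R) + M%:R by rewrite -natr1; ring.
have E6 : - (M.+1)%:R + 1 = - M%:R :> F by rewrite -natr1; ring.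
rewrite (pochSl E1) (pochSl E2) (pochSl E3) (pochSl E4) (pochSl E5) (pochSl E6).
rewrite (pochSl (erefl (b + 1))) (pochSl (erefl (c + 1))) (pochSl (erefl (d + 1))).
rewrite (pochSl (erefl (e + 1))) (pochSl (erefl (a + 1))) natr_factS.
have := natr_fact_neq0 (F := F) m; have : (m.+1)%:R != 0 :> F by rewrite pnatr_eq0.
(* poch_pred peels the top factor of poch (a + 1); when that factor vanishes, both sides do. *)
have [am0|am0] := eqVneq (a + 1 + m%:R) 0.
  have -> : (m.+1)%:R + a = 0 by rewrite -am0 -natr1; ring.
  rewrite mulr0 mul0r.
  case: m am0 {pb pc pd pe pN} => [|m] am0 _ _.
    have -> : a + 1 = 0 by rewrite -am0 mulr0n addr0.
    by rewrite !(mulr0, mul0r).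
  rewrite (pochS (a + 2%:R)) (_ : a + 2%:R + m%:R = 0) ?(mulr0, mul0r) //.
  by rewrite -am0 -natr1; ring.
rewrite (poch_pred _ _ am0) (_ : a + 1 + 1 = a + 2%:R); last by ring.
by move=> *; field; rewrite !nat1r; repeat (apply/andP; split).
Qed.

Lemma bal_term_shift a b c d e M m :
  1 + a - b != 0 -> 1 + a - c != 0 -> d + e - a - (M.+1)%:R != 0 ->
  poch (1 + (a + 2%:R) - (b + 1)) m != 0 -> poch (1 + (a + 2%:R) - (c + 1)) m != 0 ->
  poch ((d + 1) + (e + 1) - (a + 2%:R) - M%:R) m != 0 ->
  (m.+1)%:R * bal_term (a - b - c) a b c d e M.+1 m.+1
  = (a - b - c) * bal_shift_factor a b c d e M *
    bal_term (1 + (a + 2%:R) - (b + 1) - (c + 1)) (a + 2%:R) (b + 1) (c + 1) (d + 1) (e + 1) M m.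
Proof.
move=> *; rewrite /bal_term /bal_shift_factor.
have E1 : 1 + a - b + 1 = 1 + (a + 2%:R) - (b + 1) by ring.
have E2 : 1 + a - c + 1 = 1 + (a + 2%:R) - (c + 1) by ring.
have E3 : d + e - a - (M.+1)%:R + 1 = (d + 1) + (e + 1) - (a + 2%:R) - M%:R.
  by rewrite -natr1; ring.
have E6 : - (M.+1)%:R + 1 = - M%:R :> F by rewrite -natr1; ring.
have E7 : a - b - c + 1 = 1 + (a + 2%:R) - (b + 1) - (c + 1) by ring.
rewrite (pochSl E1) (pochSl E2) (pochSl E3) (pochSl E6) (pochSl E7).
rewrite (pochSl (erefl (d + 1))) (pochSl (erefl (e + 1))) natr_factS.
have := natr_fact_neq0 (F := F) m; have : (m.+1)%:R != 0 :> F by rewrite pnatr_eq0.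
by move=> *; field; rewrite !nat1r; repeat (apply/andP; split).
Qed.

Lemma bal_term_raise a b c d e N n :
  a - b - c != 0 -> poch (1 + a - b) n != 0 -> poch (1 + a - c) n != 0 ->
  poch (d + e - a - N%:R) n != 0 ->
  bal_term (1 + a - b - c) a b c d e N n
  = bal_term (a - b - c) a b c d e N n * ((a - b - c + n%:R) / (a - b - c)).
Proof.
move=> abc0 *; rewrite /bal_term (_ : 1 + a - b - c = a - b - c + 1); last by ring.
rewrite poch_succ //; have := natr_fact_neq0 (F := F) n.
by move=> *; field; repeat (apply/andP; split).
Qed.

Lemma whipple_factor_shift a b c d e M :
  a + 2%:R != 0 ->
  1 + a - b != 0 -> 1 + a - c != 0 -> 1 + a - d != 0 -> 1 + a - e != 0 ->
  1 + a + (M.+1)%:R != 0 -> d + e - a - (M.+1)%:R != 0 ->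
  poch (1 + (a + 2%:R) - (d + 1)) M != 0 -> poch (1 + (a + 2%:R) - (e + 1)) M != 0 ->
  vwp_shift_factor a b c d e M * whipple_factor (a + 2%:R) (d + 1) (e + 1) M
  = - (b * c) * whipple_factor a d e M.+1 * bal_shift_factor a b c d e M.
Proof.
move=> a2 hb hc hd he hN hD pd pe.
rewrite /vwp_shift_factor /whipple_factor /bal_shift_factor.
have E1 : 1 + a - d + 1 = 1 + (a + 2%:R) - (d + 1) by ring.
have E2 : 1 + a - e + 1 = 1 + (a + 2%:R) - (e + 1) by ring.
rewrite (pochSl E1) (pochSl E2) (pochSl (erefl (1 + a + 1))) (pochS (1 + a - d - e)).
have hN' : 1 + a + 1 + M%:R != 0.
  by move: hN; rewrite -natr1; apply: contra => /eqP E; apply/eqP; rewrite -E; ring.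
rewrite (poch_pred _ _ hN') (_ : 1 + a + 1 + 1 = 1 + (a + 2%:R)); last by ring.
rewrite (_ : 1 + (a + 2%:R) - (d + 1) - (e + 1) = 1 + a - d - e); last by ring.
by field; rewrite !nat1r; repeat (apply/andP; split).
Qed.

Lemma sum_vwp_shift a b c d e M :
  a != 0 -> a + 2%:R != 0 ->
  not_nonpos_int (1 + a - b) -> not_nonpos_int (1 + a - c) ->
  not_nonpos_int (1 + a - d) -> not_nonpos_int (1 + a - e) ->
  not_nonpos_int (1 + a + (M.+1)%:R) ->
  \sum_(n < M.+2) n%:R * (n%:R + a) * vwp_term a b c d e M.+1 n
  = vwp_shift_factor a b c d e M *
    \sum_(m < M.+1) vwp_term (a + 2%:R) (b + 1) (c + 1) (d + 1) (e + 1) M m.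
Proof.
move=> a0 a2 hb hc hd he hN.
have hb' : not_nonpos_int (1 + (a + 2%:R) - (b + 1)) by apply: (not_nonpos_int_succ hb); ring.
have hc' : not_nonpos_int (1 + (a + 2%:R) - (c + 1)) by apply: (not_nonpos_int_succ hc); ring.
have hd' : not_nonpos_int (1 + (a + 2%:R) - (d + 1)) by apply: (not_nonpos_int_succ hd); ring.
have he' : not_nonpos_int (1 + (a + 2%:R) - (e + 1)) by apply: (not_nonpos_int_succ he); ring.
have hN' : not_nonpos_int (1 + (a + 2%:R) + M%:R).
  by apply: (not_nonpos_int_succ hN); rewrite -natr1; ring.
rewrite big_ord_recl /= !mul0r add0r mulr_sumr; apply: eq_bigr => m _.
rewrite /bump /= add1n; apply: vwp_term_shift => //.
all: by [apply: not_nonpos_int_neq0 | apply: not_nonpos_int_poch].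
Qed.

Lemma sum_bal_shift a b c d e M :
  not_nonpos_int (1 + a - b) -> not_nonpos_int (1 + a - c) ->
  not_nonpos_int (d + e - a - (M.+1)%:R) ->
  \sum_(n < M.+2) n%:R * bal_term (a - b - c) a b c d e M.+1 n
  = (a - b - c) * bal_shift_factor a b c d e M *
    \sum_(m < M.+1) bal_term (1 + (a + 2%:R) - (b + 1) - (c + 1))
                      (a + 2%:R) (b + 1) (c + 1) (d + 1) (e + 1) M m.
Proof.
move=> hb hc hD.
have hb' : not_nonpos_int (1 + (a + 2%:R) - (b + 1)) by apply: (not_nonpos_int_succ hb); ring.
have hc' : not_nonpos_int (1 + (a + 2%:R) - (c + 1)) by apply: (not_nonpos_int_succ hc); ring.
have hD' : not_nonpos_int ((d + 1) + (e + 1) - (a + 2%:R) - M%:R).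
  by apply: (not_nonpos_int_succ hD); rewrite -natr1; ring.
rewrite big_ord_recl /= mul0r add0r mulr_sumr; apply: eq_bigr => m _.
rewrite /bump /= add1n; apply: bal_term_shift.
all: by [apply: not_nonpos_int_neq0 | apply: not_nonpos_int_poch].
Qed.

Lemma whipple_shifted a b c d e M :
  a + 2%:R != 0 ->
  not_nonpos_int (1 + a - b) -> not_nonpos_int (1 + a - c) ->
  not_nonpos_int (1 + a - d) -> not_nonpos_int (1 + a - e) ->
  not_nonpos_int (1 + a + (M.+1)%:R) -> not_nonpos_int (d + e - a - (M.+1)%:R) ->
  \sum_(k < M.+1) vwp_term (a + 2%:R) (b + 1) (c + 1) (d + 1) (e + 1) M k
  = whipple_factor (a + 2%:R) (d + 1) (e + 1) M *
    \sum_(j < M.+1) bal_term (1 + (a + 2%:R) - (b + 1) - (c + 1))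
                      (a + 2%:R) (b + 1) (c + 1) (d + 1) (e + 1) M j.
Proof.
move=> a2 hb hc hd he hN hD; apply: whipple => //.
- by apply: (not_nonpos_int_succ hb); ring.
- by apply: (not_nonpos_int_succ hc); ring.
- by apply: (not_nonpos_int_succ hd); ring.
- by apply: (not_nonpos_int_succ he); ring.
- by apply: (not_nonpos_int_succ hN); rewrite -natr1; ring.
- by apply: (not_nonpos_int_succ hD); rewrite -natr1; ring.
Qed.

Theorem whipple_quadratic a b c d e p N :
  a != 0 -> a + 2%:R != 0 ->
  not_nonpos_int (1 + a - b) -> not_nonpos_int (1 + a - c) ->
  not_nonpos_int (1 + a - d) -> not_nonpos_int (1 + a - e) ->
  not_nonpos_int (1 + a + N%:R) -> not_nonpos_int (d + e - a - N%:R) ->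
  p != 0 -> a - p != 0 -> a - b - c != 0 -> p * (a - p) - b * c != 0 ->
  let h := p * (b + c - a) * (p - a) / (p * (a - p) - b * c) in
  \sum_(n < N.+1) vwp_term a b c d e N n * ((p + n%:R) * (a - p + n%:R) / (p * (a - p)))
  = whipple_factor a d e N * \sum_(n < N.+1) bal_term (a - b - c) a b c d e N n * ((h + n%:R) / h).
Proof.
move=> a0 a2 hb hc hd he hN hD p0 ap0 abc0 den0 h.
have h0 : h != 0.
  rewrite /h; have -> : b + c - a = - (a - b - c) by ring.
  have -> : p - a = - (a - p) by ring.
  by rewrite !mulf_neq0 ?oppr_eq0 ?invr_eq0.
have quadratic_weight : \sum_(n < N.+1) vwp_term a b c d e N n *
    ((p + n%:R) * (a - p + n%:R) / (p * (a - p)))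
  = \sum_(n < N.+1) vwp_term a b c d e N n +
    (p * (a - p))^-1 * \sum_(n < N.+1) n%:R * (n%:R + a) * vwp_term a b c d e N n.
  rewrite mulr_sumr -big_split; apply: eq_bigr => n _ /=.
  by field; rewrite p0 ap0.
have raise : \sum_(n < N.+1) bal_term (1 + a - b - c) a b c d e N n
  = \sum_(n < N.+1) bal_term (a - b - c) a b c d e N n
    + (a - b - c)^-1 * \sum_(n < N.+1) n%:R * bal_term (a - b - c) a b c d e N n.
  rewrite -sum_mul_affine //; apply: eq_bigr => n _.
  by rewrite bal_term_raise ?not_nonpos_int_poch.
rewrite quadratic_weight whipple // sum_mul_affine // raise.
case: N hN hD {quadratic_weight raise} => [|M] hN hD.
  by rewrite !big_ord1 !mul0r !mulr0 !addr0.
rewrite sum_vwp_shift // whipple_shifted // sum_bal_shift // mulrA.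
have pd : poch (1 + (a + 2%:R) - (d + 1)) M != 0.
  by apply: not_nonpos_int_poch; apply: (not_nonpos_int_succ hd); ring.
have pe : poch (1 + (a + 2%:R) - (e + 1)) M != 0.
  by apply: not_nonpos_int_poch; apply: (not_nonpos_int_succ he); ring.
rewrite whipple_factor_shift //; try by apply: not_nonpos_int_neq0.
rewrite /h; field.
have -> : p - a = - (a - p) by ring.
have -> : b + c - a = - (a - b - c) by ring.
by rewrite den0 !oppr_eq0 p0 ap0 abc0.
Qed.

End Contiguous.

Section HypergeometricForm.
Context {F : numFieldType}.

Lemma lower_ok_cons (y : F) s : lower_ok (y :: s) -> not_nonpos_int y /\ lower_ok s.
Proof.
move=> ok; split=> [k|z z_s]; last by apply: ok; rewrite in_cons z_s orbT.
by apply/eqP => /eqP; rewrite addr_eq0 => /eqP; apply: ok (mem_head _ _) k.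
Qed.

Lemma term_9F8_vwp {f a1 a2 p d1 d2 : F} {N} n :
  lower_ok [:: (f - 1) / 2%:R; f - a1; f - a2; p; f - p - 1; f - d1; f - d2; f + N%:R] ->
  (\prod_(x <- [:: f - 1; (f + 1) / 2%:R; a1; a2; f - p; p + 1; d1; d2; - N%:R]) poch x n) /
  ((\prod_(y <- [:: (f - 1) / 2%:R; f - a1; f - a2; p; f - p - 1; f - d1; f - d2; f + N%:R])
     poch y n) * (n`!)%:R)
  = vwp_term (f - 1) a1 a2 d1 d2 N n * ((p + n%:R) * (f - 1 - p + n%:R) / (p * (f - 1 - p))).
Proof.
move=> /lower_ok_cons[n2 /lower_ok_cons[nb /lower_ok_cons[nc /lower_ok_cons[np
  /lower_ok_cons[nfp /lower_ok_cons[nd /lower_ok_cons[ne /lower_ok_cons[nN _]]]]]]]].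
have E1 : 1 + (f - 1) = f by ring.
rewrite !big_cons big_nil /vwp_term !E1 (_ : f - 1 - p = f - p - 1); last by ring.
have h2 := not_nonpos_int_neq0 n2; have hp := not_nonpos_int_neq0 np.
have hfp := not_nonpos_int_neq0 nfp.
have f1 : f - 1 != 0 by apply: contraNneq h2 => ->; rewrite mul0r.
have -> : poch ((f + 1) / 2%:R) n = poch ((f - 1) / 2%:R) n * ((f - 1) / 2%:R + n%:R) / ((f - 1) / 2%:R).
  by rewrite -poch_succ //; congr poch; field.
have -> : poch (f - p) n = poch (f - p - 1) n * (f - p - 1 + n%:R) / (f - p - 1).
  by rewrite -poch_succ //; congr poch; ring.
rewrite (poch_succ _ _ hp).
have := natr_fact_neq0 (F := F) n.
by move=> *; field; repeat (apply/andP; split); try apply: not_nonpos_int_poch.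
Qed.

Lemma term_5F4_bal {f a1 a2 d1 d2 h : F} {N} n :
  lower_ok [:: f - a1; f - a2; 1 + d1 + d2 - f - N%:R; h] ->
  (\prod_(x <- [:: d1; d2; f - a1 - a2 - 1; h + 1; - N%:R]) poch x n) /
  ((\prod_(y <- [:: f - a1; f - a2; 1 + d1 + d2 - f - N%:R; h]) poch y n) * (n`!)%:R)
  = bal_term (f - 1 - a1 - a2) (f - 1) a1 a2 d1 d2 N n * ((h + n%:R) / h).
Proof.
move=> /lower_ok_cons[nb /lower_ok_cons[nc /lower_ok_cons[nD /lower_ok_cons[nh _]]]].
have E1 : 1 + (f - 1) = f by ring.
rewrite !big_cons big_nil /bal_term !E1 (poch_succ _ _ (not_nonpos_int_neq0 nh)).
rewrite (_ : d1 + d2 - (f - 1) - N%:R = 1 + d1 + d2 - f - N%:R); last by ring.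
rewrite (_ : f - 1 - a1 - a2 = f - a1 - a2 - 1); last by ring.
have := natr_fact_neq0 (F := F) n; have := not_nonpos_int_neq0 nh.
by move=> *; field; repeat (apply/andP; split); try apply: not_nonpos_int_poch.
Qed.

End HypergeometricForm.

Theorem mainTheorem2 (R : realType) (N : nat) (f a1 a2 p d1 d2 : R[i]) :
  lower_ok [:: (f - 1) / 2%:R; f - a1; f - a2; p; f - p - 1; f - d1; f - d2;
               f + N%:R] ->
  p * (f - p - 1) - a1 * a2 != 0 ->
  let h := p * (a1 + a2 - f + 1) * (p - f + 1) / (p * (f - p - 1) - a1 * a2) in
  lower_ok [:: f - a1; f - a2; 1 + d1 + d2 - f - N%:R; h] ->
  hypF_term N
    [:: f - 1; (f + 1) / 2%:R; a1; a2; f - p; p + 1; d1; d2; - N%:R]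
    [:: (f - 1) / 2%:R; f - a1; f - a2; p; f - p - 1; f - d1; f - d2; f + N%:R] 1
  = poch f N * poch (f - d1 - d2) N / (poch (f - d1) N * poch (f - d2) N)
    * hypF_term N
        [:: d1; d2; f - a1 - a2 - 1; h + 1; - N%:R]
        [:: f - a1; f - a2; 1 + d1 + d2 - f - N%:R; h] 1.
Proof.
move=> L1 den0 h L2.
rewrite !hypF_term1.
under eq_bigr => n _ do rewrite (term_9F8_vwp n L1).
under [in RHS]eq_bigr => n _ do rewrite (term_5F4_bal n L2).
move: L1 => /lower_ok_cons[n2 /lower_ok_cons[nb /lower_ok_cons[nc /lower_ok_cons[np
  /lower_ok_cons[nfp /lower_ok_cons[nd /lower_ok_cons[ne /lower_ok_cons[nN _]]]]]]]].
move: L2 => /lower_ok_cons[_ /lower_ok_cons[_ /lower_ok_cons[nD /lower_ok_cons[nh _]]]].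
have E1 : 1 + (f - 1) = f by ring.
have Efp : f - 1 - p = f - p - 1 by ring.
have -> : poch f N * poch (f - d1 - d2) N / (poch (f - d1) N * poch (f - d2) N)
  = whipple_factor (f - 1) d1 d2 N by rewrite /whipple_factor !E1.
have Eh : h = p * (a1 + a2 - (f - 1)) * (p - (f - 1)) / (p * (f - 1 - p) - a1 * a2).
  by rewrite /h Efp; congr (_ * _ * _ / _); ring.
rewrite Eh; apply: whipple_quadratic; rewrite ?E1 ?Efp //.
- by apply: contraNneq (not_nonpos_int_neq0 n2) => ->; rewrite mul0r.
- have half : (f - 1) / 2%:R + 1%:R = (f - 1 + 2%:R) / 2%:R by field.
  by have := n2 1%N; apply: contra => /eqP E; rewrite half E mul0r.
- by rewrite (_ : d1 + d2 - (f - 1) - N%:R = 1 + d1 + d2 - f - N%:R) //; ring.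
- exact: not_nonpos_int_neq0.
- exact: not_nonpos_int_neq0.
- have Ea : a1 + a2 - f + 1 = - (f - 1 - a1 - a2) by ring.
  by apply: contraNneq (not_nonpos_int_neq0 nh) => E; apply/eqP; rewrite /h Ea E oppr0 mulr0 !mul0r.
Qed.
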